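(* Let $k\ge2$, $1\le m<k$, and alternatives $\ell=1,\dots,k$ with i.i.d. replications (independent across alternatives) whose means are pairwise distinct and ordered $\mu_{\langle 1\rangle}>\dots>\mu_{\langle k\rangle}$, satisfying Assumptions 1–4 of the context, and let $G_{ij}$ be as in the context. Let $r^*=(r^*_{\langle1\rangle},\dots,r^*_{\langle k\rangle})$ be an optimal solution of maximize $\min_{i\in\{1,\dots,m\},j\in\{m+1,\dots,k\}}G_{ij}(r_{\langle i\rangle},r_{\langle j\rangle})$ subject to $\sum_{\ell=1}^kr_{\langle\ell\rangle}=1$, $r_{\langle\ell\rangle}\ge0$. Then for all $h\in\{1,\dots,m\}$ and $\ell\in\{m+1,\dots,k\}$, $\min_{j\in\{m+1,\dots,k\}}G_{hj}(r^*_{\langle h\rangle},r^*_{\langle j\rangle})=\min_{i\in\{1,\dots,m\}}G_{i\ell}(r^*_{\langle i\rangle},r^*_{\langle \ell\rangle})$.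
   Context: $G_{ij}(r_{\langle i\rangle},r_{\langle j\rangle})=\inf_{x\in\mathbb R}\big(r_{\langle i\rangle}\Lambda^*_{\langle i\rangle}(x)+r_{\langle j\rangle}\Lambda^*_{\langle j\rangle}(x)\big)$ (the large deviations rate of the event $\bar X_{\langle j\rangle}(r_{\langle j\rangle}T)\ge\bar X_{\langle i\rangle}(r_{\langle i\rangle}T)$), where $\Lambda^*_\ell(x)=\sup_\lambda\{\lambda x-\Lambda_\ell(\lambda)\}$. $\bar X_\ell(n)$ is the sample mean of $n$ replications of alternative $\ell$, $\Lambda^{(n)}_\ell(\lambda)=\log\mathbb E[e^{\lambda\bar X_\ell(n)}]$. Assumption 1: $\Lambda_\ell(\lambda)=\lim_{n\to\infty}\frac1n\Lambda^{(n)}_\ell(n\lambda)$ exists as an extended real number for all $\lambda$. With $\mathcal D_{\Lambda_\ell}=\{\lambda:\Lambda_\ell(\lambda)<\infty\}$, interior $\mathcal D^o_{\Lambda_\ell}$, and $\mathcal F_\ell=\{\Lambda'_\ell(\lambda):\lambda\in\mathcal D^o_{\Lambda_\ell}\}$, interior $\mathcal F^o_\ell$: Assumption 2: $0\in\mathcal D^o_{\Lambda_\ell}$. Assumption 3: $\Lambda_\ell$ strictly convex, continuous on $\mathcal D^o_{\Lambda_\ell}$ and steep. Assumption 4: $[\mu_{\langle k\rangle},\mu_{\langle1\rangle}]\subset\bigcap_\ell\mathcal F^o_\ell$. *)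

From HB Require Import structures.
From mathcomp Require Import all_boot all_order all_algebra.
From mathcomp Require Import all_classical all_reals all_analysis.
Set Implicit Arguments. Unset Strict Implicit. Unset Printing Implicit Defensive.
Import Order.TTheory GRing.Theory Num.Theory.
Import numFieldNormedType.Exports.
Local Open Scope classical_set_scope.
Local Open Scope ring_scope.

Section Defs.
Context {R : realType}.

Definition mutual_indep {d} {T : measurableType d} (P : probability T R)
  {I : eqType} (X : I -> {RV P >-> R}) : Prop :=
  forall (s : seq I) (B : I -> set R), uniq s -> (forall i, measurable (B i)) ->
    P (\big[setI/setT]_(i <- s) (X i @^-1` B i))
    = (\prod_(i <- s) P (X i @^-1` B i))%E.

Definition LambdaN {d} {T : measurableType d} (P : probability T R)
  (Y : nat -> T -> R) (n : nat) (lam : R) : \bar R :=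
  lne (\int[P]_w (expR (lam * ((n%:R)^-1 * \sum_(t < n) Y t w)))%:E)%E.

Definition dom_eff (L : R -> \bar R) : set R := [set lam | (L lam < +oo)%E].

Definition dLam (L : R -> \bar R) : R -> R := derive1 (fun x => fine (L x)).

Definition Fset (L : R -> \bar R) : set R := dLam L @` interior (dom_eff L).

Definition strictly_convex_eff (L : R -> \bar R) : Prop :=
  forall x y t : R, dom_eff L x -> dom_eff L y -> x != y -> 0 < t < 1 ->
    (L (t * x + (1 - t) * y)%R < t%:E * L x + (1 - t)%R%:E * L y)%E.

(* steepness (essential smoothness, Dembo--Zeitouni Def. 2.3.5, 1-d):
   Lambda is differentiable on the interior of D_Lambda and |Lambda'(lam_n)|
   -> +oo for every sequence lam_n in the interior converging to a boundary
   point of the interior. *)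
Definition steep (L : R -> \bar R) : Prop :=
  (forall x, interior (dom_eff L) x -> derivable (fun y => fine (L y)) x 1)
  /\ forall (u : nat -> R) (b : R),
      (forall n, interior (dom_eff L) (u n)) -> u @ \oo --> b ->
      ~ interior (dom_eff L) b ->
      (fun n => (`|dLam L (u n)|)%:E) @ \oo --> +oo%E.

Definition LamStar (L : R -> \bar R) (x : R) : \bar R :=
  ereal_sup (range (fun lam => ((lam * x)%:E - L lam)%E)).

Definition Grate (Li Lj : R -> \bar R) (a b : R) : \bar R :=
  ereal_inf (range (fun x => (a%:E * LamStar Li x + b%:E * LamStar Lj x)%E)).

(* objective: min over i in {1..m} (indices < m), j in {m+1..k} (indices >= m) *)
Definition objective (k m : nat) (L : 'I_k -> R -> \bar R) (r : 'I_k -> R)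
  : \bar R :=
  ereal_inf [set z | exists i j : 'I_k,
     [/\ (i < m)%N, (m <= j)%N & z = Grate (L i) (L j) (r i) (r j)]].

Definition simplex (k : nat) (r : 'I_k -> R) : Prop :=
  \sum_(l < k) r l = 1 /\ forall l, 0 <= r l.

End Defs.

Arguments mutual_indep {R d T} P {I} X.
Arguments LambdaN {R d T} P Y n lam.
Arguments objective {R} k m L r.
Arguments simplex {R} k r.

From HB Require Import structures.
From mathcomp Require Import all_boot all_order all_algebra.
From mathcomp Require Import all_classical all_reals all_analysis.
From mathcomp Require Import ring lra measurable_realfun.
Import Order.TTheory GRing.Theory Num.Theory.
Import numFieldNormedType.Exports.
Local Open Scope classical_set_scope.
Local Open Scope ring_scope.

(* Since G_ij(a, b) is an infimum of functions of (a, b) that are linear with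
   nonnegative coefficients Lambda*_i(x), Lambda*_j(x), we have
   t G_ij(a, b) <= G_ij(a', b') whenever t a <= a' and t b <= b', and
   G_ij(0, b), G_ij(a, 0) <= 0 because Lambda*_l(mu_l) = 0.  Let z > 0 be the
   optimal value.  If every pair through some alternative p had rate above z,
   shrinking r_p by a factor t < 1 and spreading the freed mass evenly over the
   other alternatives would keep the pairs through p above z and multiply the
   other rates by at least 1 + e, so the objective would exceed z.
   Positivity of z comes from Lambda_l(0) = 0, Jensen's bound
   Lambda_l(lam) >= lam mu_l and differentiability of Lambda_l at 0: they force
   Lambda_l'(0) = mu_l, so Lambda*_l stays away from 0 on each side of the gap
   between mu_<m> and mu_<m+1>. *)

Lemma uniform_pos_bound {R : realDomainType} (n : nat) (Q : 'I_n -> R -> Prop) :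
  (forall i e e', 0 < e' <= e -> Q i e -> Q i e') ->
  (forall i, exists2 e, 0 < e & Q i e) -> exists2 e, 0 < e & forall i, Q i e.
Proof.
move=> Q_mono Q_pos.
have /choice[e he] : forall i, exists e, 0 < e /\ Q i e.
  by move=> i; have [e e0 Qe] := Q_pos i; exists e.
have emin_gt0 : 0 < \big[Order.min/1]_(i < n) e i.
  by apply: lt_bigmin => // i _; exact: (he i).1.
exists (\big[Order.min/1]_(i < n) e i) => // i.
by apply: Q_mono (e i) _ _ (he i).2; rewrite emin_gt0 bigmin_le.
Qed.

Lemma ereal_scale_lt {R : realType} (c : R) (M : \bar R) : 0 < c -> (c%:E < M)%E ->
  exists2 t, 0 < t < 1 & (c%:E < t%:E * M)%E.
Proof.
move=> c0; case: M => [M| |] cM; last by rewrite ltNge leNye in cM.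
- rewrite lte_fin in cM; have M0 : 0 < M by exact: lt_trans cM.
  have cM1 : c / M < 1 by rewrite ltr_pdivrMr ?mul1r.
  have tM : (c / M + 1) / 2 * M = (c + M) / 2 by field; rewrite gt_eqF.
  exists ((c / M + 1) / 2); last by rewrite -EFinM lte_fin tM; lra.
  by apply/andP; split; [rewrite divr_gt0 ?addr_gt0 ?divr_gt0 | lra].
- by exists (1 / 2); [lra | rewrite gt0_muley ?lte_fin ?ltry //; lra].
Qed.

Section slopes.
Context {R : realType}.

Lemma dnbhs_le_at_right (x : R) : x^'+ --> x^'.
Proof. by move=> A /nbhs_ballP[e e0 xeA]; exists e => // y xey /gt_eqF/negbT; exact: xeA. Qed.

Lemma dnbhs_le_at_left (x : R) : x^'- --> x^'.
Proof. by move=> A /nbhs_ballP[e e0 xeA]; exists e => // y xey /lt_eqF/negbT; exact: xeA. Qed.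

Context {f : R -> R} {mu : R}.
Hypotheses (df : derivable f 0 1) (f0 : f 0 = 0).

Lemma slope_cvg : (fun y => f y / y) @ 0^' --> 'D_1 f 0.
Proof.
have -> : (fun y => f y / y) = (fun h => h^-1 *: ((f \o shift 0) (h *: 1) - f 0)).
  by apply/funext => h; rewrite /= f0 subr0 addr0 [h *: 1]mulr1 mulrC.
exact: df.
Qed.

Hypothesis f_ge : \forall y \near 0, y * mu <= f y.

Lemma derive_tangent_lb : 'D_1 f 0 = mu.
Proof.
have slope_left := cvg_trans (cvg_app _ (dnbhs_le_at_left 0)) slope_cvg.
have slope_right := cvg_trans (cvg_app _ (dnbhs_le_at_right 0)) slope_cvg.
apply/eqP; rewrite eq_le; apply/andP; split.
- rewrite -(cvg_lim _ slope_left) //; apply: limr_le; first by apply/cvg_ex; exists ('D_1 f 0).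
  near=> y; have y0 : y < 0 by near: y; exact: nbhs_left_lt.
  rewrite ler_ndivrMr // mulrC; near: y; exact: cvg_within f_ge.
- rewrite -(cvg_lim _ slope_right) //; apply: limr_ge; first by apply/cvg_ex; exists ('D_1 f 0).
  near=> y; have y0 : 0 < y by near: y; exact: nbhs_right_gt.
  rewrite ler_pdivlMr // mulrC; near: y; exact: cvg_within f_ge.
Unshelve. all: by end_near.
Qed.

Lemma lt_line_left s : s < mu -> \forall y \near 0^'-, f y < y * s.
Proof.
move=> smu; have slope_left := cvg_trans (cvg_app _ (dnbhs_le_at_left 0)) slope_cvg.
rewrite derive_tangent_lb in slope_left.
near=> y; have y0 : y < 0 by near: y; exact: nbhs_left_lt.
rewrite mulrC -(ltr_ndivlMr _ _ y0); near: y; exact: cvgr_gt slope_left _ smu.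
Unshelve. all: by end_near.
Qed.

Lemma lt_line_right s : mu < s -> \forall y \near 0^'+, f y < y * s.
Proof.
move=> mus; have slope_right := cvg_trans (cvg_app _ (dnbhs_le_at_right 0)) slope_cvg.
rewrite derive_tangent_lb in slope_right.
near=> y; have y0 : 0 < y by near: y; exact: nbhs_right_gt.
rewrite mulrC -(ltr_pdivrMr _ _ y0); near: y; exact: cvgr_lt slope_right _ mus.
Unshelve. all: by end_near.
Qed.

End slopes.

Section integrals.
Context {R : realType} {d : measure_display} {T : measurableType d}.
Variable mu : {measure set T -> \bar R}.
Local Open Scope ereal_scope.

Lemma integrable_of_fin_integral (f : T -> R) (c : R) : measurable_fun setT f ->
  \int[mu]_w (f w)%:E = c%:E -> mu.-integrable setT (EFin \o f).
Proof.
move=> mf fc; have mEf : measurable_fun setT (EFin \o f : T -> \bar R) by exact/measurable_EFinP.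
apply/integrableP; split => //.
rewrite -/((abse \o (EFin \o f))) fune_abse ge0_integralD //; last 2 first.
- exact: measurable_funepos.
- exact: measurable_funeneg.
have : \int[mu]_x (EFin \o f)^\+ x - \int[mu]_x (EFin \o f)^\- x \is a fin_num.
  by rewrite -integralE fc.
by rewrite fin_numB => /andP[pos neg]; apply: lte_add_pinfty; rewrite ltey_eq ?pos ?neg.
Qed.

Lemma le_integral_dominating (f g : T -> R) : measurable_fun setT f ->
    (forall w, (0 <= f w)%R) -> mu.-integrable setT (EFin \o g) ->
    (forall w, (g w <= f w)%R) ->
  \int[mu]_w (g w)%:E <= \int[mu]_w (f w)%:E.
Proof.
move=> mf f_ge0 ig gf; have [f_fin|] := boolP (\int[mu]_w (f w)%:E < +oo).
  apply: le_integral => // [|w _]; last by rewrite lee_fin.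
  apply/integrableP; split; first exact/measurable_EFinP.
  by under eq_integral do rewrite gee0_abs ?lee_fin //.
by rewrite -leNgt leye_eq => /eqP ->; rewrite leey.
Qed.

End integrals.

Section cumulant_limit.
Context {R : realType} {d : measure_display} {T : measurableType d}.
Context {P : probability T R} {X : nat -> {RV P >-> R}} {mu : R}.
Hypotheses (X_id : forall t, distribution P (X t) = distribution P (X 0%N))
  (X_mean : ('E_P[X 0%N] = mu%:E)%E).
Local Open Scope ereal_scope.

Lemma integral_cst_probability (c : R) : \int[P]_w c%:E = c%:E.
Proof. by have := expectation_cst P c; rewrite unlock. Qed.

Lemma replication_integrable t : P.-integrable setT (EFin \o X t).
Proof.
have X0_int : P.-integrable setT (EFin \o X 0%N).
  by apply: integrable_of_fin_integral mu _ _; [exact: measurable_funPT | rewrite -expectation_def].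
have mabs : measurable_fun [set: R] (fun y : R => `|y%:E|).
  by apply: measurableT_comp => //; exact/measurable_EFinP.
apply/integrableP; split; first by apply/measurable_EFinP; exact: measurable_funPT.
rewrite -[X in X < _](ge0_integral_distribution (X t) mabs) // X_id.
rewrite (ge0_integral_distribution (X 0%N) mabs) //.
by move/integrableP: X0_int => [].
Qed.

Lemma replication_mean t : \int[P]_w (X t w)%:E = mu%:E.
Proof.
rewrite -[LHS](integral_distribution (@EFin_measurable R setT)) ?replication_integrable //.
by rewrite X_id integral_distribution ?replication_integrable // -expectation_def.
Qed.

Lemma integral_partial_sum n : \int[P]_w (\sum_(t < n) X t w)%:E = (n%:R * mu)%:E.
Proof.
under eq_integral do rewrite -sumEFin.
rewrite integral_sum // => [|t]; last exact: replication_integrable.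
under eq_bigr do rewrite replication_mean.
by rewrite sumEFin sumr_const card_ord mulr_natl.
Qed.

Lemma expR_mean_le_integral n lam :
  (expR (lam * (n%:R * mu)))%:E <= \int[P]_w (expR (lam * \sum_(t < n) X t w)%R)%:E.
Proof.
set c := (lam * (n%:R * mu))%R.
(* Jensen's inequality, through the tangent line of [expR] at the mean [c]. *)
pose tangent w := (expR c * (1 - c) + expR c * lam * \sum_(t < n) X t w)%R.
have S_int : P.-integrable setT (fun w => (\sum_(t < n) X t w)%:E).
  under eq_fun do rewrite -sumEFin.
  by apply: integrable_sum => // t _; exact: replication_integrable.
have tangent_int : P.-integrable setT (EFin \o tangent).
  rewrite /tangent /comp; under eq_fun do rewrite EFinD (EFinM (expR c * lam)).
  by apply: integrableD => //; [exact: finite_measure_integrable_cst | exact: integrableZl].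
have -> : (expR c)%:E = \int[P]_w (tangent w)%:E.
  rewrite /tangent; under eq_integral do rewrite EFinD (EFinM (expR c * lam)).
  rewrite integralD //; last 2 first.
  - exact: finite_measure_integrable_cst.
  - exact: integrableZl.
  rewrite integral_cst_probability integralZl // integral_partial_sum.
  by rewrite -EFinM -EFinD /c; congr (_%:E); ring.
apply: le_integral_dominating => // [|w].
- apply: measurableT_comp; first exact: measurable_expR.
  by apply: measurable_funM => //; apply: measurable_sum => t; exact: measurable_funPT.
- set S := (\sum_(t < n) X t w)%R.
  have -> : tangent w = (expR c * (1 + (lam * S - c)))%R by rewrite /tangent -/S; ring.
  rewrite [X in (_ <= expR X)%R](_ : _ = c + (lam * S - c))%R; last by ring.
  by rewrite expRD ler_pM2l ?expR_gt0 // expR_ge1Dx.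
Qed.

Lemma LambdaN_at0 n : LambdaN P X n 0 = 0.
Proof.
rewrite /LambdaN; under eq_integral do rewrite mul0r expR0.
by rewrite integral_cst_probability lne1.
Qed.

Lemma mean_le_log_mgf n lam :
  (lam * (n%:R * mu))%:E <= lne (\int[P]_w (expR (lam * \sum_(t < n) X t w)%R)%:E).
Proof.
rewrite -[X in X%:E <= _]expRK -lne_EFin ?expR_gt0 // lee_lne ?expR_mean_le_integral //.
- by rewrite in_itv /= lee_fin expR_ge0 leey.
- by rewrite in_itv /= integral_ge0 ?leey // => w _; rewrite lee_fin expR_ge0.
Qed.

Lemma LambdaN_scaled_ge n lam :
  (lam * mu)%:E <= n.+1%:R^-1%:E * LambdaN P X n.+1 (n.+1%:R * lam).
Proof.
have n_gt0 : (0 < n.+1%:R :> R)%R by rewrite ltr0n.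
rewrite /LambdaN.
under eq_integral do rewrite mulrA (mulrC _ lam) -(mulrA lam) mulfV ?mulr1 ?gt_eqF //.
apply: le_trans (lee_wpmul2l _ (mean_le_log_mgf n.+1 lam)); last by rewrite lee_fin invr_ge0 ltW.
by rewrite -EFinM lee_fin mulrCA mulKf ?gt_eqF.
Qed.

Context {L : R -> \bar R}.
Hypothesis L_lim : forall lam,
  (fun n : nat => n.+1%:R^-1%:E * LambdaN P X n.+1 (n.+1%:R * lam)) @ \oo --> L lam.

Lemma cumulant_limit_at0 : L 0%R = 0.
Proof.
have := L_lim 0%R.
have -> : (fun n : nat => n.+1%:R^-1%:E * LambdaN P X n.+1 (n.+1%:R * 0%R)) = fun=> 0.
  by apply/funext => n; rewrite mulr0 LambdaN_at0 mule0.
by move/cvg_unique => L0; exact: L0 (cvg_cst _).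
Qed.

Lemma cumulant_limit_ge lam : (lam * mu)%:E <= L lam.
Proof. by apply: (cvge_to_ge (L_lim lam)); apply: nearW => n; exact: LambdaN_scaled_ge. Qed.

End cumulant_limit.

Section rate_functions.
Context {R : realType}.
Implicit Types (L : R -> \bar R) (a b t x lam mu : R).
Local Open Scope ereal_scope.

Lemma LamStar_ge L x lam : (lam * x)%:E - L lam <= LamStar L x.
Proof. by apply: ereal_sup_ubound; exists lam. Qed.

Lemma Grate_le L1 L2 a b x :
  Grate L1 L2 a b <= a%:E * LamStar L1 x + b%:E * LamStar L2 x.
Proof. by apply: ereal_inf_lbound; exists x. Qed.

Lemma LamStar_ge0 {L} x : L 0%R = 0 -> 0 <= LamStar L x.
Proof. by move=> L0; apply: le_trans (LamStar_ge L x 0%R); rewrite mul0r L0 sube0. Qed.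

Lemma LamStar_le0 {L mu} : (forall lam, (lam * mu)%:E <= L lam) -> LamStar L mu <= 0.
Proof.
by move=> L_ge; apply: ge_ereal_sup => _ [lam _ <-]; rewrite sube_le0.
Qed.

Lemma Grate0l L1 L2 b x : (0 <= b)%R -> LamStar L2 x <= 0 -> Grate L1 L2 0 b <= 0.
Proof.
move=> b0 Lx; apply: le_trans (Grate_le _ _ _ _ x) _.
by rewrite mul0e add0e mule_ge0_le0 ?lee_fin.
Qed.

Lemma Grate0r L1 L2 a x : (0 <= a)%R -> LamStar L1 x <= 0 -> Grate L1 L2 a 0 <= 0.
Proof.
move=> a0 Lx; apply: le_trans (Grate_le _ _ _ _ x) _.
by rewrite mul0e adde0 mule_ge0_le0 ?lee_fin.
Qed.

Context {L1 L2 : R -> \bar R}.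
Hypotheses (L1_ge0 : forall x, 0 <= LamStar L1 x) (L2_ge0 : forall x, 0 <= LamStar L2 x).

Lemma Grate_scale {t a b a' b'} : (0 <= t)%R -> (0 <= a)%R -> (0 <= b)%R ->
  (t * a <= a')%R -> (t * b <= b')%R -> t%:E * Grate L1 L2 a b <= Grate L1 L2 a' b'.
Proof.
move=> t0 a0 b0 ta tb; apply: le_ereal_inf_tmp => _ [x _ <-].
apply: le_trans (lee_wpmul2l _ (Grate_le L1 L2 a b x)) _; first by rewrite lee_fin.
rewrite ge0_muleDr ?mule_ge0 ?lee_fin // !muleA -!EFinM.
by apply: leeD; apply: lee_wpmul2r; rewrite ?lee_fin.
Qed.

Lemma Grate_diag_ge eps a : (0 <= a)%R ->
  (forall x, eps%:E <= LamStar L1 x \/ eps%:E <= LamStar L2 x) ->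
  (a * eps)%:E <= Grate L1 L2 a a.
Proof.
move=> a0 sep; apply: le_ereal_inf_tmp => _ [x _ <-]; rewrite EFinM.
have aL1 : 0 <= a%:E * LamStar L1 x by rewrite mule_ge0 ?lee_fin.
have aL2 : 0 <= a%:E * LamStar L2 x by rewrite mule_ge0 ?lee_fin.
case: (sep x) => [L1x|L2x].
- by rewrite -[leLHS]adde0 leeD // lee_wpmul2l ?lee_fin.
- by rewrite -[leLHS]add0e leeD // lee_wpmul2l ?lee_fin.
Qed.

End rate_functions.

Section LamStar_positive.
Context {R : realType} {L : R -> \bar R} {mu : R}.
Hypotheses (L0 : L 0 = 0%E) (L_ge : forall lam, ((lam * mu)%:E <= L lam)%E)
  (dom0 : interior (dom_eff L) 0) (dL0 : derivable (fun y => fine (L y)) 0 1).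

Lemma dom_eff_fineK y : dom_eff L y -> L y = (fine (L y))%:E.
Proof.
move=> Ly; rewrite fineK //; apply/fin_numPlt; rewrite Ly andbT.
exact: lt_le_trans (ltNyr _) (L_ge y).
Qed.

Lemma LamStar_ge_line y s x : dom_eff L y -> y * s <= y * x ->
  ((y * s - fine (L y))%:E <= LamStar L x)%E.
Proof.
move=> Ly yx; apply: le_trans (LamStar_ge L x y).
by rewrite (dom_eff_fineK _ Ly) -EFinB lee_fin lerB.
Qed.

Let fine_L0 : fine (L 0) = 0.
Proof. by rewrite L0. Qed.

Let fine_L_ge : \forall y \near 0, y * mu <= fine (L y).
Proof. by apply: filterS dom0 => y Ly; rewrite -lee_fin -dom_eff_fineK. Qed.

Lemma LamStar_gt0_below s : s < mu ->
  exists2 eps, 0 < eps & forall x, x <= s -> (eps%:E <= LamStar L x)%E.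
Proof.
move=> smu.
have : \forall y \near 0^'-, [/\ y < 0, dom_eff L y & fine (L y) < y * s].
  near=> y; split; near: y; [exact: nbhs_left_lt | exact: cvg_within dom0 |].
  exact: lt_line_left dL0 fine_L0 fine_L_ge _ smu.
case/filter_ex => y [y0 Ly Lys]; exists (y * s - fine (L y)); first by rewrite subr_gt0.
by move=> x xs; apply: LamStar_ge_line => //; rewrite ler_wnM2l // ltW.
Unshelve. all: by end_near.
Qed.

Lemma LamStar_gt0_above s : mu < s ->
  exists2 eps, 0 < eps & forall x, s <= x -> (eps%:E <= LamStar L x)%E.
Proof.
move=> mus.
have : \forall y \near 0^'+, [/\ 0 < y, dom_eff L y & fine (L y) < y * s].
  near=> y; split; near: y; [exact: nbhs_right_gt | exact: cvg_within dom0 |].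
  exact: lt_line_right dL0 fine_L0 fine_L_ge _ mus.
case/filter_ex => y [y0 Ly Lys]; exists (y * s - fine (L y)); first by rewrite subr_gt0.
by move=> x sx; apply: LamStar_ge_line => //; rewrite ler_wpM2l // ltW.
Unshelve. all: by end_near.
Qed.

End LamStar_positive.

Section simplex.
Context {R : realType} {k : nat}.
Implicit Types (r : 'I_k -> R) (p l : 'I_k) (t : R).

Lemma simplex_le1 r l : simplex k r -> r l <= 1.
Proof. by case=> rsum r_ge0; rewrite -rsum (bigD1 l) //= lerDl sumr_ge0. Qed.

Lemma simplex_uniform : (0 < k)%N -> simplex k (fun=> k%:R^-1 : R).
Proof.
move=> k0; split=> [|l]; last by rewrite invr_ge0 ler0n.
by rewrite sumr_const card_ord -[_ *+ k]mulr_natr mulVf // pnatr_eq0 -lt0n.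
Qed.

Definition shrink_gain r p t := (1 - t) * r p / (k%:R - 1).

Definition shrink_at r p t l :=
  if l == p then t * r p else r l + shrink_gain r p t.

Hypothesis k_gt1 : (1 < k)%N.

Let k1_gt0 : 0 < k%:R - 1 :> R.
Proof. by rewrite subr_gt0 ltr1n. Qed.

Lemma shrink_gain_ge0 {r p t} : simplex k r -> t <= 1 -> 0 <= shrink_gain r p t.
Proof.
by case=> _ r_ge0 t1; rewrite /shrink_gain divr_ge0 ?mulr_ge0 ?subr_ge0 ?ler1n ?(ltnW k_gt1).
Qed.

Lemma simplex_shrink_at p {r t} : simplex k r -> 0 <= t <= 1 -> simplex k (shrink_at r p t).
Proof.
move=> rS /andP[t0 t1]; have [rsum r_ge0] := rS; split=> [|l].
- rewrite (bigD1 p) //= /shrink_at eqxx.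
  rewrite (eq_bigr (fun l => r l + shrink_gain r p t)); last by move=> l /negbTE ->.
  rewrite big_split /= sumr_const.
  have rest : \sum_(l < k | l != p) r l = 1 - r p.
    by rewrite -rsum [in RHS](bigD1 p) //= addrC addrK.
  have k1 : k.-1%:R = k%:R - 1 :> R by rewrite -{2}(prednK (ltnW k_gt1)) -natr1 addrK.
  rewrite rest cardC1 card_ord -mulr_natr k1 /shrink_gain; field.
  exact: lt0r_neq0.
- rewrite /shrink_at; case: ifP => _; first by rewrite mulr_ge0.
  by rewrite addr_ge0 // shrink_gain_ge0.
Qed.

Lemma shrink_at_ge_scale p l {r t} : simplex k r -> 0 <= t <= 1 -> t * r l <= shrink_at r p t l.
Proof.
move=> rS /andP[t0 t1]; rewrite /shrink_at; case: eqP => [->//|_].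
by rewrite -[leLHS]addr0 lerD ?shrink_gain_ge0 // ler_piMl // rS.2.
Qed.

Lemma shrink_at_ge_gain {r p t l} : simplex k r -> t <= 1 -> l != p ->
  (1 + shrink_gain r p t) * r l <= shrink_at r p t l.
Proof.
move=> rS t1 /negbTE lp; rewrite /shrink_at lp mulrDl mul1r lerD2l.
by rewrite ler_piMr ?shrink_gain_ge0 // simplex_le1.
Qed.

End simplex.

Section optimal_allocation.
Context {R : realType} {k m : nat} {Lam : 'I_k -> R -> \bar R}.
Hypotheses (m_gt0 : (0 < m)%N) (m_lt_k : (m < k)%N).
Hypotheses (Lam_rate_ge0 : forall l x, (0 <= LamStar (Lam l) x)%E)
  (Lam_rate_root : forall l, exists x, (LamStar (Lam l) x <= 0)%E).
Local Open Scope ereal_scope.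

Local Notation G r i j := (Grate (Lam i) (Lam j) (r i) (r j)).

Lemma objective_le r (i j : 'I_k) : (i < m)%N -> (m <= j)%N -> objective k m Lam r <= G r i j.
Proof. by move=> im mj; apply: ereal_inf_lbound; exists i, j. Qed.

Lemma objective_ge r c :
  (forall i j : 'I_k, (i < m)%N -> (m <= j)%N -> c <= G r i j) -> c <= objective k m Lam r.
Proof. by move=> c_le; apply: le_ereal_inf_tmp => _ [i [j [im mj ->]]]; exact: c_le. Qed.

Lemma objective_uniform_gt0 {s eps : R} : (0 < eps)%R ->
    (forall (i : 'I_k) x, (i < m)%N -> (x <= s)%R -> eps%:E <= LamStar (Lam i) x) ->
    (forall (j : 'I_k) x, (m <= j)%N -> (s <= x)%R -> eps%:E <= LamStar (Lam j) x) ->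
  0 < objective k m Lam (fun=> k%:R^-1)%R.
Proof.
move=> eps0 top bot.
have k_gt0 : (0 < k%:R :> R)%R by rewrite ltr0n (leq_ltn_trans _ m_lt_k).
apply: (@lt_le_trans _ _ (k%:R^-1 * eps)%:E); first by rewrite lte_fin mulr_gt0 ?invr_gt0.
apply: objective_ge => i j im mj.
apply: Grate_diag_ge => // x.
by have [xs|/ltW sx] := leP x s; [left; exact: top | right; exact: bot].
Qed.

Context {r : 'I_k -> R}.
Hypotheses (r_simplex : simplex k r)
  (r_opt : forall r', simplex k r' -> objective k m Lam r' <= objective k m Lam r)
  (objective_gt0 : 0 < objective k m Lam r).

Let lower_bound_through p M :=
  forall i j : 'I_k, (i < m)%N -> (m <= j)%N -> i = p \/ j = p -> M <= G r i j.

Lemma weight_gt0_through {p M} : lower_bound_through p M ->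
  objective k m Lam r < M -> (0 < r p)%R.
Proof.
move=> pM zM; rewrite lt_neqAle r_simplex.2 andbT eq_sym; apply/eqP => rp0.
suff : M <= 0 by rewrite leNgt (lt_trans objective_gt0 zM).
have [pm|mp] := ltnP p m.
- pose j : 'I_k := Ordinal m_lt_k; have [x Lx] := Lam_rate_root j.
  apply: le_trans (pM p j pm (leqnn m) (or_introl erefl)) _.
  by rewrite rp0; apply: Grate0l Lx; exact: r_simplex.2.
- pose i : 'I_k := Ordinal (leq_ltn_trans (leq_pred m) m_lt_k).
  have [x Lx] := Lam_rate_root i.
  apply: le_trans (pM i p _ mp (or_intror erefl)) _; first by rewrite /= prednK.
  by rewrite rp0; apply: Grate0r Lx; exact: r_simplex.2.
Qed.

Let k_gt1 : (1 < k)%N := leq_ltn_trans m_gt0 m_lt_k.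

Lemma objective_shrink_at_ge {p M t} : lower_bound_through p M -> (0 < t < 1)%R ->
  Order.min (t%:E * M) ((1 + shrink_gain r p t)%:E * objective k m Lam r)
    <= objective k m Lam (shrink_at r p t).
Proof.
move=> pM /andP[t0 t1]; have t01 : (0 <= t <= 1)%R by rewrite !ltW.
apply: objective_ge => i j im mj; rewrite ge_min; apply/orP.
have [ri rj] := (r_simplex.2 i, r_simplex.2 j).
have [/orP ij_p|] := boolP ((i == p) || (j == p)).
- left; apply: le_trans (Grate_scale (Lam_rate_ge0 i) (Lam_rate_ge0 j) (ltW t0) ri rj
      (shrink_at_ge_scale k_gt1 p i r_simplex t01) (shrink_at_ge_scale k_gt1 p j r_simplex t01)).
  apply: lee_wpmul2l; first by rewrite lee_fin ltW.
  by apply: (pM i j im mj); case: ij_p => /eqP; [left|right].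
- rewrite negb_or => /andP[ip jp]; right.
  have e1_ge0 : (0 <= 1 + shrink_gain r p t)%R by rewrite addr_ge0 ?shrink_gain_ge0 ?ltW.
  apply: le_trans (Grate_scale (Lam_rate_ge0 i) (Lam_rate_ge0 j) e1_ge0 ri rj
      (shrink_at_ge_gain k_gt1 r_simplex (ltW t1) ip) (shrink_at_ge_gain k_gt1 r_simplex (ltW t1) jp)).
  by apply: lee_wpmul2l; [rewrite lee_fin | exact: objective_le].
Qed.

Lemma objective_ge_through p M : lower_bound_through p M -> M <= objective k m Lam r.
Proof.
move=> pM; rewrite leNgt; apply/negP => zM.
have rp_gt0 := weight_gt0_through pM zM.
have [zr zr_gt0 z_eq] : exists2 zr : R, (0 < zr)%R & objective k m Lam r = zr%:E.
  have z_fin : objective k m Lam r \is a fin_num.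
    by rewrite ge0_fin_numE ?(ltW objective_gt0) // (lt_le_trans zM) ?leey.
  by exists (fine (objective k m Lam r)); rewrite ?fineK // -lte_fin fineK.
have zrM : zr%:E < M by rewrite -z_eq.
have [t t01 ztM] := ereal_scale_lt _ _ zr_gt0 zrM; have /andP[t0 t1] := t01.
have t_in : (0 <= t <= 1)%R by rewrite !ltW.
have gain_gt0 : (0 < shrink_gain r p t)%R.
  by rewrite /shrink_gain divr_gt0 ?mulr_gt0 ?subr_gt0 ?ltr1n.
have := r_opt _ (simplex_shrink_at k_gt1 p r_simplex t_in); apply/negP; rewrite -ltNge.
apply: (lt_le_trans _ (objective_shrink_at_ge pM t01)).
by rewrite lt_min z_eq ztM -EFinM lte_fin ltr_pMl // ltrDl.
Qed.

Lemma row_rate_eq_objective (h : 'I_k) : (h < m)%N ->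
  ereal_inf [set z | exists j : 'I_k, (m <= j)%N /\ z = G r h j] = objective k m Lam r.
Proof.
move=> hm; apply/eqP; rewrite eq_le; apply/andP; split.
- apply: (@objective_ge_through h) => i j im mj [->|jh]; first by apply: ereal_inf_lbound; exists j.
  by move: hm; rewrite -jh ltnNge mj.
- by apply: le_ereal_inf_tmp => _ [j [mj ->]]; exact: objective_le.
Qed.

Lemma col_rate_eq_objective (l : 'I_k) : (m <= l)%N ->
  ereal_inf [set z | exists i : 'I_k, (i < m)%N /\ z = G r i l] = objective k m Lam r.
Proof.
move=> ml; apply/eqP; rewrite eq_le; apply/andP; split.
- apply: (@objective_ge_through l) => i j im mj [il|->]; last by apply: ereal_inf_lbound; exists i.
  by move: ml; rewrite -il leqNgt im.
- by apply: le_ereal_inf_tmp => _ [i [im ->]]; exact: objective_le.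
Qed.

End optimal_allocation.

Section separation.
Context {R : realType} {k m : nat}.
Context {mu : 'I_k -> R} {Lam : 'I_k -> R -> \bar R}.
Hypotheses (m_gt0 : (0 < m)%N) (m_lt_k : (m < k)%N)
  (mu_decr : forall i j : 'I_k, (i < j)%N -> mu j < mu i).

Lemma separating_level :
  exists s, forall l : 'I_k, ((l < m)%N -> s < mu l) /\ ((m <= l)%N -> mu l < s).
Proof.
have mu_noninc (i j : 'I_k) : (i <= j)%N -> mu j <= mu i.
  by rewrite leq_eqVlt => /orP[/eqP/val_inj ->|/mu_decr/ltW].
pose i0 : 'I_k := Ordinal (leq_ltn_trans (leq_pred m) m_lt_k).
pose j0 : 'I_k := Ordinal m_lt_k.
have gap : mu j0 < mu i0 by apply: mu_decr; rewrite /= prednK.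
exists ((mu i0 + mu j0) / 2) => l; split => [lm|ml].
- have : mu i0 <= mu l by apply: mu_noninc; rewrite /= -ltnS prednK.
  lra.
- have : mu l <= mu j0 by exact: mu_noninc.
  lra.
Qed.

Hypotheses (Lam0 : forall l, Lam l 0 = 0%E)
  (Lam_ge : forall l lam, ((lam * mu l)%:E <= Lam l lam)%E)
  (Lam_dom0 : forall l, interior (dom_eff (Lam l)) 0)
  (Lam_derivable0 : forall l, derivable (fun y => fine (Lam l y)) 0 1).

Lemma LamStar_separated s :
  (forall l : 'I_k, ((l < m)%N -> s < mu l) /\ ((m <= l)%N -> mu l < s)) ->
  exists2 eps, 0 < eps & forall (l : 'I_k) x,
    ((l < m)%N -> x <= s -> (eps%:E <= LamStar (Lam l) x)%E) /\
    ((m <= l)%N -> s <= x -> (eps%:E <= LamStar (Lam l) x)%E).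
Proof.
move=> sep; apply: uniform_pos_bound.
  move=> l e e' /andP[e'0 e'e] Le x; have [top bot] := Le x.
  by split=> [lm xs|ml sx]; [apply: le_trans (top lm xs) | apply: le_trans (bot ml sx)];
    rewrite lee_fin.
move=> l; have [lm|ml] := ltnP l m.
- have [eps eps0 Leps] := LamStar_gt0_below (Lam0 l) (Lam_ge l) (Lam_dom0 l) (Lam_derivable0 l) _ ((sep l).1 lm).
  by exists eps => // x; split=> // _; exact: Leps.
- have [eps eps0 Leps] := LamStar_gt0_above (Lam0 l) (Lam_ge l) (Lam_dom0 l) (Lam_derivable0 l) _ ((sep l).2 ml).
  by exists eps => // x; split=> // _; exact: Leps.
Qed.

End separation.

Theorem corollary1 (R : realType) (d : measure_display) (T : measurableType d)
  (P : probability T R) (k m : nat)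
  (hk : (2 <= k)%N) (hm1 : (1 <= m)%N) (hmk : (m < k)%N)
  (* X l t : t-th replication of alternative l; alternatives are indexed by
     their rank (index 0 = <1>, ..., index k-1 = <k>) *)
  (X : 'I_k -> nat -> {RV P >-> R})
  (hind : mutual_indep P (fun p : 'I_k * nat => X p.1 p.2))
  (hid : forall l t, distribution P (X l t) = distribution P (X l 0%N))
  (mu : 'I_k -> R)
  (hmean : forall l, ('E_P[X l 0%N] = (mu l)%:E)%E)
  (hord : forall i j : 'I_k, (i < j)%N -> mu j < mu i)
  (Lam : 'I_k -> R -> \bar R)
  (* Assumption 1 *)
  (A1 : forall l lam,
      (fun n : nat => ((n.+1%:R)^-1)%:E
                      * LambdaN P (fun t => X l t) n.+1 (n.+1%:R * lam))%E
        @ \oo --> Lam l lam)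
  (* Assumption 2 *)
  (A2 : forall l, interior (dom_eff (Lam l)) 0)
  (* Assumption 3 *)
  (A3 : forall l, [/\ strictly_convex_eff (Lam l),
                     (forall x, interior (dom_eff (Lam l)) x ->
                        {for x, continuous (fun y => fine (Lam l y))})
                   & steep (Lam l)])
  (* Assumption 4: [mu_<k>, mu_<1>] is contained in every F^o_l *)
  (A4 : forall x : R, (exists j, mu j <= x) -> (exists i, x <= mu i) ->
          forall l, interior (Fset (Lam l)) x)
  (r : 'I_k -> R)
  (hr : simplex k r)
  (hopt : forall r' : 'I_k -> R, simplex k r' ->
            (objective k m Lam r' <= objective k m Lam r)%E) :
  forall h l : 'I_k, (h < m)%N -> (m <= l)%N ->
    ereal_inf [set z | exists j : 'I_k,
                 (m <= j)%N /\ z = Grate (Lam h) (Lam j) (r h) (r j)]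
    = ereal_inf [set z | exists i : 'I_k,
                 (i < m)%N /\ z = Grate (Lam i) (Lam l) (r i) (r l)].
Proof.
have Lam0 l : Lam l 0 = 0%E := cumulant_limit_at0 (A1 l).
have Lam_ge l lam : ((lam * mu l)%:E <= Lam l lam)%E := cumulant_limit_ge (hid l) (hmean l) (A1 l) lam.
have Lam_derivable0 l : derivable (fun y => fine (Lam l y)) 0 1.
  by have [_ _ [+ _]] := A3 l; apply; exact: A2.
have rate_ge0 l x : (0 <= LamStar (Lam l) x)%E := LamStar_ge0 x (Lam0 l).
have rate_root l : exists x, (LamStar (Lam l) x <= 0)%E.
  by exists (mu l); exact: LamStar_le0 (Lam_ge l).
have [s sep] := separating_level hm1 hmk hord.
have [eps eps_gt0 rate_sep] := LamStar_separated Lam0 Lam_ge A2 Lam_derivable0 _ sep.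
have objective_gt0 : (0 < objective k m Lam r)%E.
  have k_gt0 : (0 < k)%N by apply: leq_ltn_trans hmk.
  apply: (lt_le_trans _ (hopt _ (simplex_uniform k_gt0))).
  apply: (objective_uniform_gt0 (s := s) hmk rate_ge0 eps_gt0) => [i x|j x].
  - exact: (rate_sep i x).1.
  - exact: (rate_sep j x).2.
move=> h l hm ml.
rewrite (row_rate_eq_objective hm1 hmk rate_ge0 rate_root hr hopt objective_gt0 _ hm).
by rewrite (col_rate_eq_objective hm1 hmk rate_ge0 rate_root hr hopt objective_gt0 _ ml).
Qed.
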